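(* Let $S$, $\Phi$, $\kappa$ and the unit vector field $v$ be as in the context. Then for each $l\ge1$ there is a vector field of unit vectors $v^l:S\to\mathbb R^2$ such that for $\kappa$-a.e. $x\in S$, writing $x=\Phi(w)$ with $w=(w_0w_1\dots)\in\Sigma$, $$\Big\|\frac{D\psi_{w_0\dots w_{l-1}}}{\|D\psi_{w_0\dots w_{l-1}}\|_{HS}}-v^l(x)\otimes v(x)\Big\|_{HS}\longrightarrow 0\quad\text{as }l\to\infty.$$ (The convergence is not asserted to be uniform in $x$.)
   Context: Let $T_1=\begin{pmatrix}3/5&0\\0&1/5\end{pmatrix}$, $T_2=\begin{pmatrix}3/10&\sqrt3/10\\ \sqrt3/10&1/2\end{pmatrix}$, $T_3=\begin{pmatrix}3/10&-\sqrt3/10\\ -\sqrt3/10&1/2\end{pmatrix}$, $\bar A=(0,0)$, $\bar B=(1,1/\sqrt3)$, $\bar C=(1,-1/\sqrt3)$, and $\psi_1(x)=\bar A+T_1(x-\bar A)$, $\psi_2(x)=\bar B+T_2(x-\bar B)$, $\psi_3(x)=\bar C+T_3(x-\bar C)$. The harmonic Sierpinski gasket $S$ is the unique nonempty compact set with $S=\bigcup_i\psi_i(S)$. Let $\Sigma=\{1,2,3\}^{\mathbb N}$; for $w\in\Sigma$ write $\psi_{w_0\dots w_l}=\psi_{w_0}\circ\cdots\circ\psi_{w_l}$ (affine, with constant derivative $D\psi_{w_0\dots w_l}$). The coding map $\Phi:\Sigma\to S$ sends $w$ to the unique point of $\bigcap_l\psi_{w_0\dots w_l}(\triangle)$, $\triangle$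 the closed triangle $\bar A\bar B\bar C$; $\Phi$ is continuous, surjective and injective outside a countable set. For a $2\times2$ matrix $A$, $\|A\|_{HS}^2=\mathrm{tr}({}^tAA)$. For vectors $u,w\in\mathbb R^2$, $u\otimes w$ is the linear map $a\mapsto (a,u)\,w$. For a unit vector $v$, $P_v$ is the orthogonal projection onto $\mathbb R v$. Kusuoka's measure: let $\mathcal L$ act on continuous symmetric-matrix fields by $(\mathcal LA)(x)=\sum_i{}^tD\psi_iA_{\psi_i(x)}D\psi_i$; it has a simple positive eigenvalue $\beta$ (eigenspace spanned by $Id$), and there is a unique semipositive-definite symmetric-matrix-valued Borel measure $\tau$ on $S$ with $\mathrm{tr}\,\tau(S)=1$ and $\mathcal L^*\tau=\beta\tau$; $\tau(S)$ is a positive multiple of $Id$. Kusuoka's measure is the probability measure $\kappa(E)=\mathrm{tr}\,\tau(E)$; it is non-atomic. It is known that there is a Borel field of unit vectors $v:S\to\mathbb R^2$ with $\tau=P_{v(x)}\kappa$ and such that for $\kappa$-a.e. $x=\Phi(w)$, $P_{v(x)}=\lim_{l\to\infty}D\psi_{w_0\dots w_{l-1}}\,{}^tD\psi_{w_0\dots w_{l-1}}/\|D\psi_{w_0\dots w_{l-1}}\|_{HS}^2$. *)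

From HB Require Import structures.
From mathcomp Require Import all_boot all_order all_algebra.
From mathcomp Require Import all_classical all_reals all_analysis.
Set Implicit Arguments. Unset Strict Implicit. Unset Printing Implicit Defensive.
Import Order.TTheory GRing.Theory Num.Theory.
Import numFieldNormedType.Exports.
Local Open Scope classical_set_scope.
Local Open Scope ring_scope.

Section HarmonicGasket.
Variable R : realType.

(* Points of the plane are pairs (R * R), equipped with the product
   (= Borel) sigma-algebra and the product topology; linear algebra is
   done on column vectors 'cV[R]_2. Digits {1,2,3} are coded by 'I_3
   (digit 0,1,2 <-> 1,2,3). *)
Definition cv (p : R * R) : 'cV[R]_2 := \col_i (if i == 0 then p.1 else p.2).
Definition pt (u : 'cV[R]_2) : R * R := (u 0 0, u 1 0).

Definition s3 : R := Num.sqrt 3.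

Definition T1 : 'M[R]_2 := \matrix_(i, j) (if i == j then (if i == 0 then 3/5 else 1/5) else 0).
Definition T2 : 'M[R]_2 := \matrix_(i, j)
  (if i == j then (if i == 0 then 3/10 else 1/2) else s3 / 10).
Definition T3 : 'M[R]_2 := \matrix_(i, j)
  (if i == j then (if i == 0 then 3/10 else 1/2) else - (s3 / 10)).

Definition T (i : 'I_3) : 'M[R]_2 :=
  if val i == 0%N then T1 else if val i == 1%N then T2 else T3.

Definition fixpt (i : 'I_3) : 'cV[R]_2 :=
  if val i == 0%N then 0 else
  if val i == 1%N then \col_k (if k == 0 then 1 else 1 / s3)
  else \col_k (if k == 0 then 1 else - (1 / s3)).

Definition psi (i : 'I_3) (x : R * R) : R * R :=
  pt (fixpt i + T i *m (cv x - fixpt i)).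

Fixpoint psi_seq (s : seq 'I_3) (x : R * R) : R * R :=
  if s is i :: s' then psi i (psi_seq s' x) else x.
Definition psiw (w : nat -> 'I_3) (l : nat) : R * R -> R * R :=
  psi_seq [seq w k | k <- iota 0 l].

Definition Dpsiw (w : nat -> 'I_3) (l : nat) : 'M[R]_2 :=
  foldr (fun i M => T i *m M) 1%:M [seq w k | k <- iota 0 l].

Definition triangle : set (R * R) :=
  [set x | exists a b c : R, [/\ 0 <= a, 0 <= b, 0 <= c, a + b + c = 1 &
     cv x = a *: fixpt 0 + b *: fixpt 1 + c *: fixpt 2]].

(* x = Phi(w) : x is the (unique) point of  \bigcap_l psi_{w_0..w_l}(triangle) *)
Definition coding (w : nat -> 'I_3) (x : R * R) : Prop :=
  forall l : nat, exists2 y, triangle y & x = psiw w l.+1 y.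

Definition is_attractor (S : set (R * R)) : Prop :=
  [/\ S !=set0, compact S & S = \bigcup_(i in [set: 'I_3]) (psi i @` S)].

Definition hs {m n} (A : 'M[R]_(m, n)) : R := Num.sqrt (\tr (A^T *m A)).

(* u (x) w : a |-> (a,u) w, i.e. the matrix  w u^T *)
Definition vtensor (u w : 'cV[R]_2) : 'M[R]_2 := w *m u^T.

Definition mxproj (v : 'cV[R]_2) : 'M[R]_2 := v *m v^T.

Definition unit_vec (v : 'cV[R]_2) : Prop := hs v = 1.

(* beta: the eigenvalue of L whose eigenspace is spanned by Id,
   i.e.  L Id = sum_i tD psi_i D psi_i = beta Id *)
Definition L_eigenvalue_Id (beta : R) : Prop :=
  \sum_(i < 3) (T i)^T *m T i = beta%:M.

Definition psd_mx_measure (S : set (R * R)) (tau : set (R * R) -> 'M[R]_2) : Prop :=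
  [/\ tau set0 = 0,
      (forall F : nat -> set (R * R), (forall n, measurable (F n)) ->
         trivIset setT F -> forall i j,
         (fun n : nat => \sum_(k < n) tau (F k) i j) @ \oo --> tau (\bigcup_n F n) i j),
      (forall E, measurable E -> (tau E)^T = tau E /\
         forall u : 'cV[R]_2, 0 <= (u^T *m tau E *m u) 0 0)
    & tau (~` S) = 0].

(* L^* tau = beta tau, where by duality with
   (L A)(x) = sum_i tD psi_i A_{psi_i x} D psi_i  one has
   (L^* tau)(E) = sum_i D psi_i tau(psi_i^{-1} E) tD psi_i *)
Definition kusuoka_tau (S : set (R * R)) (beta : R) (tau : set (R * R) -> 'M[R]_2) : Prop :=
  [/\ psd_mx_measure S tau,
      (forall E, measurable E ->
         \sum_(i < 3) T i *m tau (psi i @^-1` E) *m (T i)^T = beta *: tau E)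
    & \tr (tau S) = 1].

Definition kappa (tau : set (R * R) -> 'M[R]_2) (E : set (R * R)) : R := \tr (tau E).

Definition kappa_ae (tau : set (R * R) -> 'M[R]_2) (P : R * R -> Prop) : Prop :=
  exists N : set (R * R), [/\ measurable N, kappa tau N = 0 & forall x, ~ N x -> P x].

End HarmonicGasket.
Arguments Dpsiw {R}.
Arguments psiw {R}.
Arguments T {R}.
Arguments fixpt {R}.
Arguments s3 {R}.

(* Let M_l = Dpsi_{w_0..w_{l-1}} / |Dpsi_{w_0..w_{l-1}}|_HS and E_l = M_l tM_l - P_v.
   As tr E_l = 1 - |v|^2, the hypothesis E_l -> 0 forces |v| = 1.  For the unit
   vector u_l = tM_l v / |tM_l v| one computes |M_l - u_l (x) v|^2 = 2 - 2 |tM_l v|,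
   while Cauchy-Schwarz against v tv gives |tM_l v|^2 = 1 + <v tv, E_l> >= 1 - |E_l|;
   hence |M_l - u_l (x) v|^2 <= 2 |E_l| -> 0.
   For u_l to define a field v^l(x), the coding w of x must be determined by x.  The
   three cells psi_i(triangle) meet only at images of vertices, so two different
   codings of x make x a junction point psi_s(psi_c(vertex)); there are countably
   many of those, and they are kappa-null because kappa has no atoms. *)

From HB Require Import structures.
From mathcomp Require Import all_boot all_order all_algebra.
From mathcomp Require Import all_classical all_reals all_analysis.
From mathcomp Require Import ring lra.
Import Order.TTheory GRing.Theory Num.Theory.
Import numFieldNormedType.Exports.
Set Implicit Arguments. Unset Strict Implicit. Unset Printing Implicit Defensive.
Local Open Scope classical_set_scope.
Local Open Scope ring_scope.

Section Frobenius.
Variable R : realType.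
Implicit Types m n : nat.

Definition mxdot {m n} (A B : 'M[R]_(m, n)) : R := \tr (A^T *m B).

Lemma hsE m n (A : 'M[R]_(m, n)) : hs A = Num.sqrt (mxdot A A).
Proof. by []. Qed.

Lemma mxdotC m n (A B : 'M[R]_(m, n)) : mxdot A B = mxdot B A.
Proof. by rewrite /mxdot -mxtrace_tr trmx_mul trmxK. Qed.

Lemma mxdotBr m n (A B C : 'M[R]_(m, n)) : mxdot A (B - C) = mxdot A B - mxdot A C.
Proof. by rewrite /mxdot mulmxBr linearB. Qed.

Lemma mxdotZr m n k (A B : 'M[R]_(m, n)) : mxdot A (k *: B) = k * mxdot A B.
Proof. by rewrite /mxdot -scalemxAr linearZ. Qed.

Lemma mxdot1mx n (A : 'M[R]_n) : mxdot 1%:M A = \tr A.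
Proof. by rewrite /mxdot trmx1 mul1mx. Qed.

Lemma mxdot_sqr m n (A : 'M[R]_(m, n)) : mxdot A A = \sum_j \sum_i A i j ^+ 2.
Proof.
by apply: eq_bigr => j _; rewrite mxE; apply: eq_bigr => i _; rewrite mxE expr2.
Qed.

Lemma mxdot_ge0 m n (A : 'M[R]_(m, n)) : 0 <= mxdot A A.
Proof. by rewrite mxdot_sqr; do 2!apply: sumr_ge0 => ? _; rewrite sqr_ge0. Qed.

Lemma hs_ge0 m n (A : 'M[R]_(m, n)) : 0 <= hs A.
Proof. exact: sqrtr_ge0. Qed.

Lemma sqr_hs m n (A : 'M[R]_(m, n)) : hs A ^+ 2 = mxdot A A.
Proof. by rewrite sqr_sqrtr ?mxdot_ge0. Qed.

Lemma hs_eq0 m n (A : 'M[R]_(m, n)) : (hs A == 0) = (A == 0).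
Proof.
apply/idP/eqP => [|->]; last by rewrite hsE /mxdot mulmx0 mxtrace0 sqrtr0.
rewrite -sqrf_eq0 sqr_hs mxdot_sqr => /eqP A0; apply/matrixP => i j; rewrite mxE.
have sum_ge0 k : 0 <= \sum_i A i k ^+ 2 by apply: sumr_ge0 => ? _; rewrite sqr_ge0.
have /psumr_eq0P Aj : \sum_i A i j ^+ 2 = 0 by apply: (psumr_eq0P _ A0).
by apply/eqP; rewrite -sqrf_eq0 Aj // => ? _; rewrite sqr_ge0.
Qed.

Lemma hsZ m n k (A : 'M[R]_(m, n)) : hs (k *: A) = `|k| * hs A.
Proof.
by rewrite !hsE mxdotZr mxdotC mxdotZr mulrA -expr2 sqrtrM ?sqr_ge0 // sqrtr_sqr.
Qed.

Lemma sqr_hsB m n (A B : 'M[R]_(m, n)) :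
  hs (A - B) ^+ 2 = hs A ^+ 2 - 2 * mxdot A B + hs B ^+ 2.
Proof.
rewrite !sqr_hs mxdotBr mxdotC mxdotBr [mxdot (A - B) B]mxdotC mxdotBr (mxdotC B A).
ring.
Qed.

Lemma CauchySchwarz_mxdot m n (A B : 'M[R]_(m, n)) :
  mxdot A B ^+ 2 <= hs A ^+ 2 * hs B ^+ 2.
Proof.
have [->|B0] := eqVneq B 0.
  by rewrite /mxdot mulmx0 mxtrace0 expr0n mulr_ge0 ?sqr_ge0.
have b0 : 0 < hs B ^+ 2 by rewrite exprn_gt0 // lt_neqAle eq_sym hs_eq0 B0 hs_ge0.
have := sqr_ge0 (hs (A - (mxdot A B / hs B ^+ 2) *: B)).
rewrite sqr_hsB mxdotZr hsZ exprMn real_normK ?num_real //.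
set a := hs A ^+ 2; set b := hs B ^+ 2; set d := mxdot A B.
have -> : a - 2 * (d / b * d) + (d / b) ^+ 2 * b = a - d ^+ 2 / b.
  by field; rewrite gt_eqF.
by rewrite subr_ge0 ler_pdivrMr // mulrC.
Qed.

Lemma sqr_mxtrace_le m (E : 'M[R]_m) : \tr E ^+ 2 <= m%:R * hs E ^+ 2.
Proof.
by rewrite -mxdot1mx -[m%:R]mxtrace1 -mxdot1mx -sqr_hs CauchySchwarz_mxdot.
Qed.

Lemma trmx_mul_col m (u z : 'cV[R]_m) : u^T *m z = (mxdot u z)%:M.
Proof. by rewrite /mxdot trace_mx11 -mx11_scalar. Qed.

Lemma mxdot_outer m n (M : 'M[R]_(m, n)) (v : 'cV_m) (u : 'cV_n) :
  mxdot (v *m u^T) M = mxdot u (M^T *m v).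
Proof.
rewrite /mxdot trmx_mul trmxK -mulmxA mxtrace_mulC -[RHS]mxtrace_tr.
by rewrite !trmx_mul !trmxK.
Qed.

Lemma hs_outer m n (v : 'cV[R]_m) (u : 'cV_n) : hs (v *m u^T) = hs v * hs u.
Proof.
apply/eqP; rewrite -(eqrXn2 (_ : 0 < 2)%N) ?mulr_ge0 ?hs_ge0 // exprMn !sqr_hs.
by rewrite mxdot_outer trmx_mul trmxK -mulmxA trmx_mul_col mul_mx_scalar mxdotZr.
Qed.

Definition normalize n (z : 'cV[R]_n.+1) : 'cV_n.+1 :=
  if z == 0 then delta_mx 0 0 else (hs z)^-1 *: z.

Lemma hs_normalize n (z : 'cV[R]_n.+1) : hs (normalize z) = 1.
Proof.
rewrite /normalize; case: eqP => [_|/eqP z0].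
  by rewrite hsE /mxdot trmx_delta mul_delta_mx trace_mx11 mxE sqrtr1.
by rewrite hsZ ger0_norm ?invr_ge0 ?hs_ge0 // mulVf // hs_eq0.
Qed.

Lemma mxdot_normalize n (z : 'cV[R]_n.+1) : mxdot (normalize z) z = hs z.
Proof.
rewrite /normalize; case: eqP => [->|/eqP z0].
  by rewrite /mxdot mulmx0 mxtrace0 hsE /mxdot mulmx0 mxtrace0 sqrtr0.
by rewrite mxdotC mxdotZr -sqr_hs expr2 mulrA mulVf ?mul1r // hs_eq0.
Qed.

Lemma sqr_hs_sub_outer_le m n (M : 'M[R]_(m, n)) (v : 'cV_m) (u : 'cV_n) :
  hs M = 1 -> hs v = 1 -> hs u = 1 -> mxdot u (M^T *m v) = hs (M^T *m v) ->
  hs (M - v *m u^T) ^+ 2 <= 2 * hs (M *m M^T - v *m v^T).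
Proof.
move=> M1 v1 u1 uMv.
set t := hs (M^T *m v); set e := hs (M *m M^T - v *m v^T).
have -> : hs (M - v *m u^T) ^+ 2 = 2 - 2 * t.
  by rewrite sqr_hsB M1 hs_outer v1 u1 mxdotC mxdot_outer uMv -/t; ring.
have vv1 : hs (v *m v^T) = 1 by rewrite hs_outer v1 mulr1.
have t2 : mxdot (v *m v^T) (M *m M^T - v *m v^T) = t ^+ 2 - 1.
  rewrite mxdotBr -sqr_hs vv1 expr1n mxdot_outer trmx_mul trmxK sqr_hs.
  by rewrite /mxdot trmx_mul trmxK !mulmxA.
have := CauchySchwarz_mxdot (v *m v^T) (M *m M^T - v *m v^T).
rewrite t2 vv1 expr1n mul1r -/e -real_normK ?num_real // ler_sqr ?nnegrE ?hs_ge0 //.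
rewrite ler_norml => /andP[te _].
have t0 : 0 <= t := hs_ge0 _.
have e0 : 0 <= e := hs_ge0 _.
nra.
Qed.

Lemma mxtrace_mul_trmx m n (A : 'M[R]_(m, n)) : \tr (A *m A^T) = hs A ^+ 2.
Proof. by rewrite mxtrace_mulC sqr_hs. Qed.

Lemma sqr_sub1_hs_le m n (M : 'M[R]_(m, n)) (v : 'cV_m) : hs M = 1 ->
  (1 - hs v ^+ 2) ^+ 2 <= m%:R * hs (M *m M^T - v *m v^T) ^+ 2.
Proof.
move=> M1; have -> : 1 - hs v ^+ 2 = \tr (M *m M^T - v *m v^T).
  by rewrite linearB /= !mxtrace_mul_trmx M1 expr1n.
exact: sqr_mxtrace_le.
Qed.

Lemma hs_eq1_of_cvg m n (M : nat -> 'M[R]_(m, n)) (v : 'cV_m) :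
  (forall l, hs (M l) = 1) ->
  (fun l => hs (M l *m (M l)^T - v *m v^T)) @ \oo --> 0 -> hs v = 1.
Proof.
set e := fun l => hs _ => M1 e0.
have ee0 : (fun l => m%:R * (e l * e l)) @ \oo --> 0.
  by rewrite -[X in _ --> X](mulr0 m%:R) -(mulr0 0); apply: cvgMl_tmp; apply: cvgM.
have : (1 - hs v ^+ 2) ^+ 2 <= 0.
  apply: (ler_cvg_to (cvg_cst _) ee0); apply: nearW => l.
  by rewrite -expr2; exact: sqr_sub1_hs_le.
rewrite le_eqVlt ltNge sqr_ge0 orbF sqrf_eq0 subr_eq0 eq_sym sqrp_eq1 ?hs_ge0 //.
by move/eqP.
Qed.

Lemma cvg_sub_outer_normalize m n (M : nat -> 'M[R]_(m, n.+1)) (v : 'cV_m) :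
  (forall l, hs (M l) = 1) ->
  (fun l => hs (M l *m (M l)^T - v *m v^T)) @ \oo --> 0 ->
  (fun l => hs (M l - v *m (normalize ((M l)^T *m v))^T)) @ \oo --> 0.
Proof.
move=> M1 e0; have v1 := hs_eq1_of_cvg M1 e0.
apply: (@squeeze_cvgr _ _ _ _ (cst 0)
  (fun l => Num.sqrt (2 * hs (M l *m (M l)^T - v *m v^T)))).
- near=> l; rewrite hs_ge0 /= -[hs _]ger0_norm ?hs_ge0 // -sqrtr_sqr.
  rewrite ler_sqrt ?mulr_ge0 ?hs_ge0 //.
  exact: sqr_hs_sub_outer_le (M1 l) v1 (hs_normalize _) (mxdot_normalize _).
- exact: cvg_cst.
- rewrite -sqrtr0 -[X in Num.sqrt X](mulr0 2).
  apply: continuous_cvg; first exact: sqrt_continuous.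
  exact: cvgMl_tmp.
Unshelve. all: end_near.
Qed.

Lemma mulmx_trmx_scale m n k (A : 'M[R]_(m, n)) :
  (k *: A) *m (k *: A)^T = k ^+ 2 *: (A *m A^T).
Proof. by rewrite linearZ -scalemxAl -scalemxAr scalerA -expr2. Qed.

End Frobenius.

Lemma det_mx22 (R : comRingType) (A : 'M[R]_2) :
  \det A = A 0 0 * A 1 1 - A 0 1 * A 1 0.
Proof.
rewrite (expand_det_row _ 0) !big_ord_recl big_ord0 addr0 /cofactor !det_mx11 !mxE /=.
rewrite expr0 expr1 mul1r mulN1r mulrN.
by congr (A _ _ * A _ _ - A _ _ * A _ _); apply: val_inj.
Qed.

Section NullSets.
Context d (T : measurableType d) (R : realType) (mu : set T -> R).
Hypothesis mu_sigma_additive : forall F : nat -> set T,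
  (forall n, measurable (F n)) -> trivIset setT F ->
  (fun n => \sum_(k < n) mu (F k)) @ \oo --> mu (\bigcup_n F n).
Hypothesis set1_measurable : forall x : T, measurable [set x].
Hypothesis mu_set1 : forall x : T, mu [set x] = 0.
Hypothesis mu0 : mu set0 = 0.

Lemma null_set_extend (N0 : set T) (c : nat -> T) : measurable N0 -> mu N0 = 0 ->
  exists N, [/\ measurable N, mu N = 0, N0 `<=` N & range c `<=` N].
Proof.
move=> mN0 muN0.
pose G n := if n is k.+1 then [set c k] else N0.
have mG n : measurable (G n) by case: n => // k; exact: set1_measurable.
have mseqDU n : measurable (seqDU G n).
  by apply: measurableD; last exact: bigsetU_measurable.
have seqDU0 n : mu (seqDU G n) = 0.
  case: n => [|k]; first by rewrite /seqDU big_ord0 setD0.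
  by have [->|->] := subset_set1 (@subset_seqDU _ G k.+1).
exists (\bigcup_n G n); split.
- exact: bigcupT_measurable.
- have := mu_sigma_additive mseqDU (@trivIset_seqDU _ G).
  rewrite -seqDU_bigcup_eq; under eq_cvg do rewrite big1 //.
  by move=> h; exact: cvg_unique _ h (cvg_cst 0).
- by move=> x N0x; exists 0%N.
- by move=> _ [k _ <-]; exists k.+1.
Qed.

End NullSets.

Section Gasket.
Variable R : realType.

Lemma s3_gt0 : 0 < s3 :> R. Proof. by rewrite sqrtr_gt0. Qed.
Lemma s3_neq0 : s3 != 0 :> R. Proof. by rewrite gt_eqF ?s3_gt0. Qed.
Lemma sqr_s3 : s3 ^+ 2 = 3 :> R. Proof. by rewrite sqr_sqrtr. Qed.

Lemma cvK : cancel (@cv R) (@pt R). Proof. by case=> a b; rewrite /pt /cv !mxE. Qed.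

Lemma ptK : cancel (@pt R) (@cv R).
Proof.
move=> u; apply/matrixP => i j; rewrite !mxE (ord1 j).
by case: i => [[|[|//]] ?] /=; congr (u _ _); exact: val_inj.
Qed.

Lemma T_unit (i : 'I_3) : (T i : 'M[R]_2) \in unitmx.
Proof.
have s3s : s3 / 10 * (s3 / 10) = 3 / 100 :> R by rewrite -sqr_s3; field.
rewrite unitmxE unitfE det_mx22 /T; case: i => [[|[|[|//]]] ?]; rewrite /= !mxE /=.
all: rewrite ?mulrNN ?s3s; apply/eqP; lra.
Qed.

Definition Tprod (s : seq 'I_3) : 'M[R]_2 := foldr (fun i M => T i *m M) 1%:M s.

Lemma Tprod_unit s : Tprod s \in unitmx.
Proof. by elim: s => [|i s IHs]; rewrite /= ?unitmx1 // unitmx_mul T_unit. Qed.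

Lemma cv_psiB i (x y : R * R) : cv (psi i x) - cv (psi i y) = T i *m (cv x - cv y).
Proof. by rewrite !ptK opprD addrACA subrr add0r -mulmxBr opprB addrA subrK. Qed.

Lemma cv_psi_seqB s (x y : R * R) :
  cv (psi_seq s x) - cv (psi_seq s y) = Tprod s *m (cv x - cv y).
Proof. by elim: s => [|i s IHs] /=; rewrite ?mul1mx // cv_psiB IHs mulmxA. Qed.

Lemma psi_seq_inj s : injective (@psi_seq R s).
Proof.
move=> x y Exy; apply: (can_inj cvK); apply/eqP; rewrite -subr_eq0.
by rewrite -(mulKmx (Tprod_unit s) (_ - _)) -cv_psi_seqB Exy subrr mulmx0.
Qed.

Lemma Dpsiw_neq0 w l : Dpsiw w l != 0 :> 'M[R]_2.
Proof.
apply: contraTneq (Tprod_unit [seq w k | k <- iota 0 l]) => D0.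
by rewrite unitmxE [Tprod _]D0 det0 unitr0.
Qed.

(* In these coordinates the psi_i have rational coefficients and the triangle has
   vertices (0, 0), (1, 1), (1, -1). *)
Definition chart (p : R * R) : R * R := (p.1, s3 * p.2).

Lemma chart_inj : injective chart.
Proof. by move=> [a b] [c d] [-> /(mulfI s3_neq0) ->]. Qed.

Lemma chart_psi0 y : chart (psi 0 y) = (3/5 * (chart y).1, 1/5 * (chart y).2).
Proof.
by rewrite /chart /psi /pt !mxE /= !big_ord_recr !big_ord0 /= !mxE /=; congr pair; ring.
Qed.

Lemma chart_psi1 y : chart (psi 1 y) =
  (1 + 3/10 * ((chart y).1 - 1) + 1/10 * ((chart y).2 - 1),
   1 + 3/10 * ((chart y).1 - 1) + 1/2 * ((chart y).2 - 1)).
Proof.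
rewrite /chart /psi /pt !mxE /= !big_ord_recr !big_ord0 /= !mxE /=.
have s3n := @s3_neq0.
by congr pair; [field | rewrite -[3 in RHS]sqr_s3; field].
Qed.

Lemma chart_psi2 y : chart (psi 2 y) =
  (1 + 3/10 * ((chart y).1 - 1) - 1/10 * ((chart y).2 + 1),
   -1 - 3/10 * ((chart y).1 - 1) + 1/2 * ((chart y).2 + 1)).
Proof.
rewrite /chart /psi /pt !mxE /= !big_ord_recr !big_ord0 /= !mxE /=.
have s3n := @s3_neq0.
by congr pair; [field | rewrite -[3 in RHS]sqr_s3; field].
Qed.

Lemma chart_fixpt0 : chart (pt (fixpt 0)) = (0, 0).
Proof. by rewrite /chart /pt !mxE /= mulr0. Qed.

Lemma chart_fixpt2 : chart (pt (fixpt 2)) = (1, -1).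
Proof. by rewrite /chart /pt !mxE /= mul1r mulrN divff // s3_neq0. Qed.

Lemma triangle_chart y : triangle y -> exists b c : R,
  [/\ 0 <= b, 0 <= c, b + c <= 1 & chart y = (b + c, b - c)].
Proof.
case=> a [b [c [a0 b0 c0 abc1 /(congr1 (@pt R))]]]; rewrite cvK => ->.
exists b, c; split => //; first lra.
have s3n := @s3_neq0.
by rewrite /chart /pt !mxE /=; congr pair; field.
Qed.

Lemma ord3_cases (i : 'I_3) : [\/ i = 0, i = 1 | i = 2].
Proof.
by case: i => [[|[|[|//]]] ?]; [apply: Or31 | apply: Or32 | apply: Or33]; apply: val_inj.
Qed.

Lemma psi_junction (a b : 'I_3) (y y' : R * R) :
  a != b -> triangle y -> triangle y' -> psi a y = psi b y' ->
  exists j, y = pt (fixpt j) \/ y' = pt (fixpt j).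
Proof.
wlog lt_ab : a b y y' / (a < b)%N => [hw|].
  case: (ltngtP a b) => [ab|ba|/val_inj ->]; last by rewrite eqxx.
    exact: hw.
  move=> _ ty ty' /esym E; have [j Hj] := hw b a y' y ba (negbT (ltn_eqF ba)) ty' ty E.
  by exists j; tauto.
move=> _ /triangle_chart[b0 [c0 [? ? ? cy]]] /triangle_chart[b1 [c1 [? ? ? cy']]].
move=> /(congr1 chart).
move: lt_ab; have [->|->|->] := ord3_cases a; have [->|->|->] := ord3_cases b => //= _.
all: rewrite ?chart_psi0 ?chart_psi1 ?chart_psi2 cy cy' /= => -[E1 E2].
- by exists 0; right; apply: chart_inj; rewrite cy' chart_fixpt0; congr pair; lra.
- by exists 0; right; apply: chart_inj; rewrite cy' chart_fixpt0; congr pair; lra.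
- by exists 2; left; apply: chart_inj; rewrite cy chart_fixpt2; congr pair; lra.
Qed.

Lemma psi_seq_cat (s1 s2 : seq 'I_3) (y : R * R) :
  psi_seq (s1 ++ s2) y = psi_seq s1 (psi_seq s2 y).
Proof. by elim: s1 => [|i s1 IHs] //=; rewrite IHs. Qed.

Lemma psiwS w k (y : R * R) :
  psiw w k.+1 y = psi_seq [seq w i | i <- iota 0 k] (psi (w k) y).
Proof. by rewrite /psiw -[k.+1]addn1 iotaD map_cat psi_seq_cat. Qed.

Definition junction_pt (t : seq 'I_3 * ('I_3 * 'I_3)) : R * R :=
  psi_seq t.1 (psi t.2.1 (pt (fixpt t.2.2))).

Lemma coding_junction w w' (x : R * R) :
  coding w x -> coding w' x -> w <> w' -> exists t, x = junction_pt t.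
Proof.
move=> cw cw' ww'.
have /existsNP[k0 /eqP wk0] : ~ forall k, w k = w' k by move/funext.
have [k wk kmin] := ex_minnP (ex_intro (fun k => w k != w' k) k0 wk0).
have pre : [seq w i | i <- iota 0 k] = [seq w' i | i <- iota 0 k].
  apply/eq_in_map => i; rewrite mem_iota add0n => /andP[_ ik].
  by apply/eqP; apply: contraLR ik; rewrite -leqNgt; exact: kmin.
have [y ty xE] := cw k; have [y' ty' xE'] := cw' k.
have E : psi (w k) y = psi (w' k) y'.
  by apply: (@psi_seq_inj [seq w i | i <- iota 0 k]); rewrite -psiwS pre -psiwS -xE.
rewrite xE psiwS; have [j [->|yj]] := psi_junction wk ty ty' E.
  by exists ([seq w i | i <- iota 0 k], (w k, j)).
by exists ([seq w i | i <- iota 0 k], (w' k, j)); rewrite E yj.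
Qed.

Definition junction_seq (n : nat) : R * R :=
  junction_pt (odflt ([::], (0, 0)) (unpickle n)).

Lemma range_junction_seq t : range junction_seq (junction_pt t).
Proof. by exists (pickle t); rewrite // /junction_seq pickleK. Qed.

End Gasket.

Section Kusuoka.
Variable R : realType.
Implicit Types (S : set (R * R)) (tau : set (R * R) -> 'M[R]_2).

Lemma measurable_set1_pair (p : R * R) : measurable [set p].
Proof.
case: p => a b; rewrite (_ : [set (a, b)] = [set a] `*` [set b]).
  exact: measurableX (measurable_set1 a) (measurable_set1 b).
by apply/seteqP; split => [[x y] /= [-> ->]|[x y] /= [-> ->]].
Qed.

Lemma kappa_set0 S tau : psd_mx_measure S tau -> kappa tau set0 = 0.
Proof. by case=> tau0 _ _ _; rewrite /kappa tau0 mxtrace0. Qed.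

Lemma kappa_sigma_additive S tau : psd_mx_measure S tau ->
  forall F : nat -> set (R * R), (forall n, measurable (F n)) -> trivIset setT F ->
  (fun n => \sum_(k < n) kappa tau (F k)) @ \oo --> kappa tau (\bigcup_n F n).
Proof.
case=> _ tau_sigma _ _ F mF tF; rewrite /kappa /mxtrace.
under eq_cvg do rewrite exchange_big /=.
by apply: cvg_big => // [|i _]; [exact: add_continuous | exact: tau_sigma].
Qed.

Lemma kappa_ae_coding_unique S tau (P : R * R -> Prop) :
  psd_mx_measure S tau -> (forall x, kappa tau [set x] = 0) -> kappa_ae tau P ->
  kappa_ae tau (fun x => P x /\ forall w w', coding w x -> coding w' x -> w = w').
Proof.
move=> tau_psd kappa_set1 [N0 [mN0 kN0 PN0]].
have [N [mN kN N0N JN]] := null_set_extend (kappa_sigma_additive tau_psd)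
  measurable_set1_pair kappa_set1 (kappa_set0 tau_psd) (@junction_seq R) mN0 kN0.
exists N; split => // x Nx; split; first by apply: PN0 => /N0N.
move=> w w' cw cw'; apply: contrapT => ww'.
have [t xt] := coding_junction cw cw' ww'.
by apply/Nx/JN; rewrite xt; exact: range_junction_seq.
Qed.

Definition some_coding (x : R * R) : nat -> 'I_3 :=
  if pselect (exists w, coding w x) is left h then projT1 (cid h) else fun=> 0.

Lemma some_codingP w (x : R * R) : coding w x -> coding (some_coding x) x.
Proof.
rewrite /some_coding => cw; case: pselect => [h|[]]; last by exists w.
by case: cid.
Qed.

Definition normalized_Dpsiw w l : 'M[R]_2 := (hs (Dpsiw w l))^-1 *: Dpsiw w l.

Lemma hs_normalized_Dpsiw w l : hs (normalized_Dpsiw w l) = 1.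
Proof.
by rewrite hsZ ger0_norm ?invr_ge0 ?hs_ge0 // mulVf // hs_eq0 Dpsiw_neq0.
Qed.

Lemma normalized_Dpsiw_outer w l :
  normalized_Dpsiw w l *m (normalized_Dpsiw w l)^T
  = (hs (Dpsiw w l) ^+ 2)^-1 *: (Dpsiw w l *m (Dpsiw w l)^T).
Proof. by rewrite mulmx_trmx_scale exprVn. Qed.

End Kusuoka.
Arguments normalized_Dpsiw {R}.

Theorem lemma2p3 (R : realType) (S : set (R * R)) (beta : R)
  (tau : set (R * R) -> 'M[R]_2) (v : R * R -> 'cV[R]_2) :
  is_attractor S ->
  L_eigenvalue_Id beta ->
  kusuoka_tau S beta tau ->
  (* kappa is non-atomic (known, see context) *)
  (forall x, kappa tau [set x] = 0) ->
  (* the unit vector field v of the context *)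
  (forall x, S x -> unit_vec (v x)) ->
  kappa_ae tau (fun x => forall w, coding w x ->
    (fun l : nat => hs (((hs (Dpsiw w l)) ^+ 2)^-1 *: (Dpsiw w l *m (Dpsiw w l)^T)
                        - mxproj (v x))) @ \oo --> (0 : R)) ->
  exists vl : nat -> R * R -> 'cV[R]_2,
    (forall l x, (1 <= l)%N -> S x -> unit_vec (vl l x)) /\
    kappa_ae tau (fun x => forall w, coding w x ->
      (fun l : nat => hs ((hs (Dpsiw w l))^-1 *: Dpsiw w l
                          - vtensor (vl l x) (v x))) @ \oo --> (0 : R)).
Proof.
move=> _ _ [tau_psd _ _] kappa_set1 _ cvg_proj.
pose vl l x := normalize ((normalized_Dpsiw (some_coding x) l)^T *m v x).
exists vl; split=> [l x _ _|]; first exact: hs_normalize.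
have [N [mN kN HN]] := kappa_ae_coding_unique tau_psd kappa_set1 cvg_proj.
exists N; split => // x Nx w cw; have [cvg_x coding_uniq] := HN x Nx.
rewrite /vl (coding_uniq _ _ (some_codingP cw) cw).
apply: cvg_sub_outer_normalize => [l|]; first exact: hs_normalized_Dpsiw.
under eq_cvg do rewrite normalized_Dpsiw_outer.
exact: cvg_x.
Qed.
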